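(* Let $\Gamma=\langle V,(w_u)_{u\in V},\alpha,\beta\rangle$ be a celebrity game with $\beta>1$, $n=|V|$, $W=\sum_{u\in V}w_u$ and $w_{\max}=\max_u w_u$. The edgeless graph $I_n$ on $V$ is the unique Nash equilibrium graph of $\Gamma$ if and only if $\alpha\ge w_{\max}$ and there is more than one vertex $u\in V$ such that $\alpha>W-w_u$.
   Context: A celebrity game $\Gamma=\langle V,(w_u)_{u\in V},\alpha,\beta\rangle$ consists of a set of players $V=\{1,\dots,n\}$, celebrity weights $w_u>0$, a link cost $\alpha>0$ and a critical distance $\beta$ with $1\le\beta\le n-1$. A strategy of player $u$ is a set $S_u\subseteq V\setminus\{u\}$; a strategy profile is $S=(S_1,\dots,S_n)$; its outcome graph $G[S]$ is the undirected graph on $V$ with edge set $\{\{u,v\}: u\in S_v\text{ or }v\in S_u\}$. With $d_G$ the graph distance (infinite between different connected components), the cost of player $u$ is $c_u(S)=\alpha|S_u|+\sum_{v:\,d_{G[S]}(u,v)>\beta}w_v$. $S$ is a Nash equilibrium if no player can strictly decrease its cost by changing only its own strategy; a graph $G$ is a Nash equilibrium graph of $\Gamma$ if $G=G[S]$ for some Nash equilibrium $S$. *)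

From HB Require Import structures.
From mathcomp Require Import all_boot all_order all_algebra.
Set Implicit Arguments. Unset Strict Implicit. Unset Printing Implicit Defensive.
Import Order.TTheory GRing.Theory Num.Theory.
Local Open Scope ring_scope.

(* A strategy profile: S u is the set of players u buys links to. *)
Definition profile (n : nat) := 'I_n -> {set 'I_n}.

Definition valid_profile n (S : profile n) : Prop := forall u, u \notin S u.

Definition outcome n (S : profile n) : rel 'I_n :=
  fun u v => (u \in S v) || (v \in S u).

(* within G k u v  <=>  d_G(u,v) <= k  (graph distance; infinite across components) *)
Fixpoint within n (G : rel 'I_n) (k : nat) (u v : 'I_n) : bool :=
  match k with
  | 0 => u == v
  | k.+1 => within G k u v || [exists x, within G k u x && G x v]
  end.

Definition cost (R : realFieldType) n (w : 'I_n -> R) (alpha : R) (beta : nat)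
  (S : profile n) (u : 'I_n) : R :=
  alpha * (#|S u|)%:R + \sum_(v : 'I_n | ~~ within (outcome S) beta u v) w v.

Definition deviate n (S : profile n) (u : 'I_n) (T : {set 'I_n}) : profile n :=
  fun v => if v == u then T else S v.

Definition nash (R : realFieldType) n (w : 'I_n -> R) (alpha : R) (beta : nat)
  (S : profile n) : Prop :=
  valid_profile S /\
  forall (u : 'I_n) (T : {set 'I_n}), u \notin T ->
    cost w alpha beta S u <= cost w alpha beta (deviate S u T) u.

Definition nash_graph (R : realFieldType) n (w : 'I_n -> R) (alpha : R) (beta : nat)
  (G : rel 'I_n) : Prop :=
  exists S : profile n, nash w alpha beta S /\ forall u v, G u v = outcome S u v.

Definition edgeless n : rel 'I_n := fun _ _ => false.

Definition unique_nash_graph_edgeless (R : realFieldType) n (w : 'I_n -> R)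
  (alpha : R) (beta : nat) : Prop :=
  nash_graph w alpha beta (@edgeless n) /\
  forall G : rel 'I_n, nash_graph w alpha beta G -> forall u v, G u v = edgeless u v.

From HB Require Import structures.
From mathcomp Require Import all_boot all_order all_algebra.
From mathcomp Require Import lra.
Set Implicit Arguments. Unset Strict Implicit. Unset Printing Implicit Defensive.
Import Order.TTheory GRing.Theory Num.Theory.
Local Open Scope ring_scope.

(* If two players [a1 != a2] both satisfy [W - w a < alpha], then in any
   equilibrium neither buys a link (a nonempty strategy costs at least
   alpha > W - w a, the cost of buying nothing), nobody buys two links
   (2 alpha > W), and every buyer must reach both a1 and a2 (otherwise it pays
   at least alpha + w a > W). So the outcome graph is a functional graph in
   which a1 and a2 are two distinct fixed points lying in the component of any
   buyer, which is impossible; hence nobody buys anything. Conversely, a link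
   of the edgeless graph must not be profitable, which forces alpha >= w_max,
   and if at most one player c has W - w c < alpha, the star centred at c is a
   second equilibrium graph since beta >= 2. *)

Section Within.
Variables (n : nat) (G : rel 'I_n).

Lemma within_refl k u : within G k u u.
Proof. by elim: k => [|k IH] /=; rewrite ?eqxx ?IH. Qed.

Lemma within_step k u x v : within G k u x -> G x v -> within G k.+1 u v.
Proof. by move=> hux hxv /=; apply/orP; right; apply/existsP; exists x; rewrite hux. Qed.

Lemma within_mono k k' u v : (k <= k')%N -> within G k u v -> within G k' u v.
Proof.
elim: k' => [|k' IH]; first by rewrite leqn0 => /eqP ->.
by rewrite leq_eqVlt => /orP [/eqP -> //| /IH hk] /hk /= ->.
Qed.

Lemma within_edge k u v : (0 < k)%N -> G u v -> within G k u v.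
Proof. by move=> hk huv; apply: within_mono hk (within_step (within_refl 0 u) huv). Qed.

Lemma within_edge2 k u x v : (1 < k)%N -> G u x -> G x v -> within G k u v.
Proof.
move=> hk hux hxv; apply: within_mono hk _.
exact: within_step (within_step (within_refl 0 u) hux) hxv.
Qed.

Lemma within_closed (P : 'I_n -> Prop) k u v :
  (forall x y, G x y -> P x -> P y) -> P u -> within G k u v -> P v.
Proof.
move=> hP; elim: k v => [|k IH] v Pu /=; first by move/eqP <-.
case/orP; first exact: IH.
by case/existsP=> x /andP [hux hxv]; apply: hP hxv (IH x Pu hux).
Qed.

Lemma within_iff (P : 'I_n -> Prop) k u v :
  (forall x y, G x y -> (P x <-> P y)) -> within G k u v -> (P u <-> P v).
Proof.
move=> hP; apply: (within_closed (P := fun z => P u <-> P z)) => //.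
by move=> x y /hP hxy hux; apply: iff_trans hux hxy.
Qed.

(* Follow the map [f] from a vertex: the fixed point eventually reached is an
   invariant of the components of [G]. *)
Lemma within_fixpoints_eq (f : 'I_n -> 'I_n) k k' x a b :
  (forall y z, G y z -> f y = z \/ f z = y) -> f a = a -> f b = b ->
  within G k x a -> within G k' x b -> a = b.
Proof.
move=> hG fa fb hxa hxb.
pose reaches z := exists m, iter m f z = a.
have reaches_link y z : f y = z -> (reaches y <-> reaches z).
  move=> fyz; split=> [[[|m] /=]|[m hm]]; last by exists m.+1; rewrite iterSr fyz.
  - by move=> hya; exists 0%N; rewrite -fyz hya fa.
  - by move=> hm; exists m; rewrite -fyz -iterSr.
have edge_iff y z : G y z -> (reaches y <-> reaches z).
  by case/hG=> [/reaches_link // | /reaches_link hzy]; apply: iff_sym.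
have [m hm] : reaches b.
  by apply/(within_iff edge_iff hxb)/(within_iff edge_iff hxa); exists 0%N.
by rewrite -hm iter_fix.
Qed.

End Within.

Section Weights.
Variables (R : realFieldType) (n : nat) (w : 'I_n -> R).
Hypothesis hw : forall u, 0 < w u.

Lemma ler_sum_subset (P Q : pred 'I_n) :
  (forall v, P v -> Q v) -> \sum_(v | P v) w v <= \sum_(v | Q v) w v.
Proof.
move=> hPQ; rewrite [leLHS]big_mkcond [leRHS]big_mkcond /=.
apply: ler_sum => v _; case: (boolP (P v)) => [/hPQ -> //|_].
by case: (Q v) => //; apply: ltW.
Qed.

Lemma sum_weights_ge0 (P : pred 'I_n) : 0 <= \sum_(v | P v) w v.
Proof. by apply: sumr_ge0 => v _; apply: ltW. Qed.

Lemma sum_weights_neq x : \sum_(v | v != x) w v = \sum_(v < n) w v - w x.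
Proof. by rewrite [in RHS](bigD1 x) //= addrC addrK. Qed.

End Weights.

Section Game.
Variables (R : realFieldType) (n : nat) (w : 'I_n -> R) (alpha : R) (beta : nat).
Hypothesis hw : forall u, 0 < w u.
Hypothesis halpha : 0 < alpha.

Local Notation W := (\sum_(v < n) w v).
Local Notation cost := (cost w alpha beta).
Local Notation nash := (nash w alpha beta).

Lemma cost_ge_unreached (S : profile n) u (D : pred 'I_n) :
  (forall v, D v -> ~~ within (outcome S) beta u v) ->
  alpha * (#|S u|)%:R + \sum_(v | D v) w v <= cost S u.
Proof. by move=> hD; rewrite lerD2l; apply: ler_sum_subset. Qed.

Lemma cost_le_reached (S : profile n) u (C : pred 'I_n) :
  (forall v, C v -> within (outcome S) beta u v) ->
  cost S u <= alpha * (#|S u|)%:R + \sum_(v | ~~ C v) w v.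
Proof. by move=> hC; rewrite lerD2l; apply: ler_sum_subset => // v; apply: contra => /hC. Qed.

Lemma cost_ge_closed (S : profile n) u (C : pred 'I_n) :
  C u -> (forall x y, outcome S x y -> C x -> C y) ->
  alpha * (#|S u|)%:R + \sum_(v | ~~ C v) w v <= cost S u.
Proof.
move=> Cu hC; apply: cost_ge_unreached => v; apply: contra.
exact: within_closed hC Cu.
Qed.

Lemma cost_ge_links (S : profile n) u : alpha * (#|S u|)%:R <= cost S u.
Proof. by rewrite /cost lerDl; apply: sum_weights_ge0. Qed.

Lemma cost_isolated (S : profile n) u :
  (forall v, outcome S u v = false) -> cost S u = W - w u.
Proof.
move=> hu; rewrite /cost; have -> : S u = set0.
  by apply/setP=> v; rewrite in_set0; apply/negbTE; move: (hu v); rewrite /outcome => /norP [].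
rewrite cards0 mulr0 add0r -sum_weights_neq; apply: eq_bigl => v.
congr (~~ _); apply/idP/eqP => [|->]; last exact: within_refl.
apply: (within_closed (P := fun z => z = u)) => // x y hxy hx; subst x.
by rewrite hu in hxy.
Qed.

Lemma cost_buy_nothing_le (S : profile n) u : cost (deviate S u set0) u <= W - w u.
Proof.
apply: le_trans (cost_le_reached (C := pred1 u) _) _ => [v /eqP -> |].
  exact: within_refl.
by rewrite /deviate eqxx cards0 mulr0 add0r sum_weights_neq.
Qed.

Lemma nash_cost_le (S : profile n) u : nash S -> cost S u <= W - w u.
Proof. by case=> _ hN; apply: le_trans (hN u set0 _) (cost_buy_nothing_le S u); rewrite in_set0. Qed.

Lemma alpha_le_link_cost (T : {set 'I_n}) : T != set0 -> alpha <= alpha * (#|T|)%:R.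
Proof. by move=> hT; apply: ler_peMr; [apply: ltW | rewrite ler1n lt0n cards_eq0]. Qed.

Lemma alpha_le_cost_buyer (S : profile n) u : S u != set0 -> alpha <= cost S u.
Proof. by move=> /alpha_le_link_cost hSu; apply: le_trans hSu (cost_ge_links S u). Qed.

Lemma edgeless_nash : (forall v, w v <= alpha) -> nash (fun _ => set0).
Proof.
move=> w_le; split=> [u|u T huT]; first by rewrite in_set0.
rewrite cost_isolated => [|v]; last by rewrite /outcome !in_set0.
set S := deviate _ u T; set C := [pred v | (v == u) || (v \in T)].
have hC x y : outcome S x y -> C x -> C y.
  rewrite /outcome /S /deviate /C /=.
  by case: (eqVneq y u); case: (eqVneq x u); rewrite ?in_set0 //= ?orbF => _ _ ->.
apply: le_trans (cost_ge_closed (C := C) _ hC); last by rewrite /C /= eqxx.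
rewrite -sum_weights_neq (bigID (mem T)) /= lerD //.
  apply: le_trans (_ : _ <= \sum_(v in T) w v) _.
    by apply: ler_sum_subset => // v /andP [].
  by rewrite /S /deviate eqxx mulr_natr -sumr_const; apply: ler_sum.
by apply: ler_sum_subset => // v /andP [hvu hvT]; rewrite /C /= negb_or hvu.
Qed.

Lemma nash_edgeless_weight_le (S : profile n) u v : (0 < beta)%N ->
  nash S -> (forall x y, outcome S x y = false) -> u != v -> w v <= alpha.
Proof.
move=> beta_gt0 [_ hN] hS huv.
pose C := [pred z | (z == u) || (z == v)].
have hdev : cost (deviate S u [set v]) u <=
    alpha + \sum_(z | (z != u) && (z != v)) w z.
  apply: le_trans (cost_le_reached (C := C) _) _.
    move=> z /orP [] /eqP ->; first exact: within_refl.
    by apply: within_edge => //; rewrite /outcome /deviate eqxx in_set1 eqxx orbT.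
  by rewrite /deviate eqxx cards1 mulr1; under eq_bigl do rewrite negb_or.
have hu : u \notin [set v] by rewrite in_set1.
have := le_trans (hN u [set v] hu) hdev.
rewrite cost_isolated // -sum_weights_neq (bigD1 v) 1?eq_sym //=.
by rewrite lerD2r.
Qed.

Section StarEquilibrium.
Variable c : 'I_n.

Definition star : profile n := fun v => if v == c then set0 else [set c].

Lemma outcome_star u : u != c -> outcome star u c.
Proof. by move=> huc; rewrite /outcome /star (negbTE huc) in_set1 eqxx orbT. Qed.

Lemma outcome_star_sym u : u != c -> outcome star c u.
Proof. by move=> huc; rewrite /outcome /star (negbTE huc) in_set1 eqxx. Qed.

Hypothesis hbeta : (1 < beta)%N.

Lemma within_star u v : within (outcome star) beta u v.
Proof.
case: (eqVneq u c) => [->|huc]; case: (eqVneq v c) => [->|hvc].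
- exact: within_refl.
- by apply: within_edge (ltnW hbeta) (outcome_star_sym hvc).
- by apply: within_edge (ltnW hbeta) (outcome_star huc).
- exact: within_edge2 hbeta (outcome_star huc) (outcome_star_sym hvc).
Qed.

Lemma cost_star u : cost star u = alpha * (#|star u|)%:R.
Proof. by rewrite /cost big1 ?addr0 // => v; rewrite within_star. Qed.

Lemma star_nash : (forall u, u != c -> alpha <= W - w u) -> nash star.
Proof.
move=> hc; split=> [v|u T huT].
  by rewrite /star; case: (eqVneq v c) => [_|hvc]; rewrite ?in_set0 ?in_set1.
rewrite cost_star /star; case: (eqVneq u c) => [->|huc].
  by rewrite cards0 mulr0; apply: le_trans (cost_ge_links _ _); rewrite mulr_ge0 ?ler0n ?ltW.
rewrite cards1 mulr1; have [-> | hT] := eqVneq T set0.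
  apply: le_trans (hc u huc) _; rewrite cost_isolated // => v.
  rewrite /outcome /deviate /star eqxx in_set0 orbF.
  by case: (eqVneq v u) => [_|_]; case: (eqVneq v c) => [_|_]; rewrite ?in_set0 // in_set1 (negbTE huc).
by apply: alpha_le_cost_buyer; rewrite /deviate eqxx.
Qed.

End StarEquilibrium.

Section TwoCheapPlayers.
Variables a1 a2 : 'I_n.
Hypotheses (ha12 : a1 != a2) (ha1 : W - w a1 < alpha) (ha2 : W - w a2 < alpha).
Variable S : profile n.
Hypothesis hS : nash S.

Lemma nash_cheap_player_buys_nothing a : W - w a < alpha -> S a = set0.
Proof.
move=> ha; apply/eqP; apply: contraTT ha => /alpha_le_cost_buyer hbuy.
by rewrite -leNgt (le_trans hbuy (nash_cost_le _ hS)).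
Qed.

Lemma nash_at_most_one_link u : (#|S u| <= 1)%N.
Proof.
have hW : w a1 + w a2 <= W.
  rewrite (bigD1 a1) //= (bigD1 a2) 1?eq_sym //= addrA lerDl.
  exact: sum_weights_ge0.
rewrite leqNgt; apply/negP => h2.
have : alpha * 2 <= alpha * (#|S u|)%:R by rewrite ler_pM2l // ler_nat.
have := le_trans (cost_ge_links S u) (nash_cost_le _ hS); have := hw u.
by move: ha1 ha2 hW; lra.
Qed.

Lemma nash_buyer_reaches u a : S u != set0 -> W - w a < alpha ->
  within (outcome S) beta u a.
Proof.
move=> hbuy ha; apply/negPn/negP => hua.
have hunr : forall v, pred1 a v -> ~~ within (outcome S) beta u v by move=> v /eqP ->.
have := cost_ge_unreached hunr; rewrite big_pred1_eq.
have := nash_cost_le u hS; have := hw u.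
have := alpha_le_link_cost hbuy.
by move=> *; lra.
Qed.

Definition link_of (v : 'I_n) : 'I_n := odflt v [pick y in S v].

Lemma link_ofE u v : u \in S v -> link_of v = u.
Proof.
rewrite /link_of; case: pickP => [y hy|/(_ u) -> //] hu /=.
by have /card_le1_eqP := nash_at_most_one_link v; apply.
Qed.

Lemma link_of_set0 v : S v = set0 -> link_of v = v.
Proof. by rewrite /link_of => hv; case: pickP => [y|//]; rewrite hv in_set0. Qed.

Lemma nash_two_cheap_players_edgeless u v : outcome S u v = false.
Proof.
have no_buyer x : S x = set0.
  have [//|hx] := eqVneq (S x) set0.
  have fa a : W - w a < alpha -> link_of a = a.
    by move=> ha; apply/link_of_set0/nash_cheap_player_buys_nothing.
  have hG y z : outcome S y z -> link_of y = z \/ link_of z = y.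
    by case/orP => /link_ofE; [right | left].
  exfalso; move/eqP: ha12; apply.
  exact: within_fixpoints_eq hG (fa _ ha1) (fa _ ha2)
    (nash_buyer_reaches hx ha1) (nash_buyer_reaches hx ha2).
by rewrite /outcome !no_buyer !in_set0.
Qed.

End TwoCheapPlayers.

End Game.

Lemma exists_other_ord n (v : 'I_n) : (1 < n)%N -> exists u : 'I_n, u != v.
Proof.
rewrite -[n in (1 < n)%N]card_ord => /card_gt1P [u1 [u2 [_ _ hu12]]].
by case: (eqVneq u1 v) => [<-|]; [exists u2; rewrite eq_sym | exists u1].
Qed.

Lemma card_le1_sub_set1 (T : finType) (x0 : T) (A : {set T}) :
  (#|A| <= 1)%N -> exists c, forall x, x \in A -> x = c.
Proof.
move=> /card_le1_eqP hA; have [A0 | [c hcA]] := set_0Vmem A.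
  by exists x0 => x; rewrite A0 in_set0.
by exists c => x hx; apply: hA.
Qed.

Unset Implicit Arguments.

Theorem corollary1 (R : realFieldType) (n : nat) (w : 'I_n -> R) (alpha : R)
  (beta : nat)
  (hw : forall u, 0 < w u) (halpha : 0 < alpha)
  (hbeta1 : (1 <= beta)%N) (hbetan : (beta <= n - 1)%N)
  (hbeta : (1 < beta)%N) :
  unique_nash_graph_edgeless w alpha beta <->
  (\big[Num.max/0]_(u < n) w u <= alpha /\
   (1 < #|[set u : 'I_n | (\sum_(v < n) w v - w u < alpha)%R]|)%N).
Proof.
have hn : (1 < n)%N by apply: leq_trans (leq_trans hbeta hbetan) (leq_subr 1 n).
set A := [set u | _]; split.
- move=> [[S0 [hS0 hG0]] huniq]; split.
    apply/bigmax_leP; split=> [|v _]; first exact: ltW.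
    have [u huv] := exists_other_ord v hn.
    by apply: nash_edgeless_weight_le hS0 _ huv => // x y; rewrite -hG0.
  rewrite ltnNge; apply/negP => /(card_le1_sub_set1 (Ordinal (ltnW hn))) [c hAc].
  have hc u : u != c -> alpha <= \sum_(v < n) w v - w u.
    by apply: contraR; rewrite -ltNge => huA; apply/eqP/hAc; rewrite inE.
  have star_graph : nash_graph w alpha beta (outcome (star c)).
    by exists (star c); split=> //; exact: (star_nash hw halpha hbeta hc).
  have [u huc] := exists_other_ord c hn.
  by have := huniq _ star_graph u c; rewrite outcome_star.
- move=> [hmax /card_gt1P [a1 [a2 [ha1 ha2 ha12]]]]; rewrite !inE in ha1 ha2; split.
    exists (fun _ => set0); split.
      by apply: edgeless_nash => // v; apply: le_trans hmax; apply: le_bigmax.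
    by move=> u v; rewrite /outcome !in_set0.
  move=> G [S [hS hG]] u v.
  by rewrite hG (nash_two_cheap_players_edgeless hw halpha ha12 ha1 ha2 hS).
Qed.
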